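(* Let $G$ be a finite group, let $x \in G$ have prime order $p$, and let $N$ be a normal subgroup of $N_G(\langle x\rangle)$ with $|N| = p^{2k+3}$ for some integer $k \ge 0$. Suppose $x \in N$ and that there exist elements $y, \ell, g_1, \ldots, g_k, h_1, \ldots, h_k \in N \cap C_G(x)$, each of order $p$, and an element $\sigma \in N_G(\langle x, y\rangle)$ such that: (i) $y \notin \langle x\rangle$; (ii) every $g_i$ and every $h_i$ commutes with $y$, whereas $\ell$ does not commute with $y$; (iii) for all $i, j \in \{1,\ldots,k\}$, $g_j$ commutes modulo $\langle x\rangle$ with each of $g_i$, $g_i^{\sigma}$ and $h_i$; (iv) for all $i, j \in \{1,\ldots,k\}$ with $i < j$, $g_j$ commutes modulo $\langle x\rangle$ with $h_i^{\sigma}$, but for each $i$, $g_i$ does not commute modulo $\langle x\rangle$ with $h_i^{\sigma}$. Then: (a) every subset $S \subseteq \{x, y, g_1, \ldots, g_k, h_1, \ldots, h_k, h_1^{\sigma}, \ldots, h_k^{\sigma}\}$ generates a $p$-group of order at least $p^{|S|}$; (b) $N = \langle x, y, g_1, \ldots, g_k, h_1, \ldots, h_k, \ell\rangle$; (c) the group $\langle x, y, g_1, \ldots, g_k, h_1, \ldots, h_k, g_1^{\sigma}, \ldots, g_k^{\sigma}, h_1^{\sigma}, \ldots, h_k^{\sigma}\rangle$ is a normal $p$-subgroup of $C_G(\langle x, y\rangle)$.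
   Context: For $a \in G$, $a^{\sigma} = \sigma^{-1} a \sigma$. Two elements $a, b$ ''commute modulo $\langle x\rangle$'' means that their commutator $a^{-1}b^{-1}ab$ lies in $\langle x\rangle$. $C_G(\cdot)$ and $N_G(\cdot)$ denote centraliser and normaliser in $G$. *)

From mathcomp Require Import all_boot all_fingroup all_solvable.
Set Implicit Arguments. Unset Strict Implicit. Unset Printing Implicit Defensive.

From mathcomp Require Import all_boot all_fingroup all_solvable.
From mathcomp Require Import zify.
Set Implicit Arguments. Unset Strict Implicit. Unset Printing Implicit Defensive.
Local Open Scope group_scope.

(* Everything happens inside C = C_G(<x, y>), which centralises x and hence
   normalises <x>: M = C :&: N is a normal p-subgroup of C, and so is M M^sigma
   because sigma normalises C.  Enumerate x, y, g_k, ..., g_1, h_1, ..., h_k,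
   h_1^sigma, ..., h_k^sigma.  None of these lies in the subgroup generated by
   its predecessors: the subgroup of elements commuting modulo <x> with
   h_i^sigma (for g_i), resp. with g_i (for h_i^sigma, and for h_i after
   conjugating by sigma), contains the predecessors but not the element.  In a
   p-group every such step at least multiplies the order by p, which gives (a).
   The first 2k+2 elements lie in M, which is proper in N as l does not commute
   with y; so |M| <= p^(2k+2) and they generate M, and adding l gives N.  Then
   the group in (c) is M M^sigma. *)

Section CentMod.

Variable gT : finGroupType.
Implicit Types (X : {group gT}) (a w : gT).

Definition cent1_mod X w : {group gT} := (coset X @*^-1 'C[coset X w])%G.

Lemma mem_cent1_mod X w a :
  a \in 'N(X) -> w \in 'N(X) -> (a \in cent1_mod X w) = ([~ a, w] \in X).
Proof.
move=> nXa nXw; rewrite /= morphpreE inE /= nXa inE.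
apply/cent1P/idP => [cXaw | /coset_id]; last by rewrite morphR // => /eqP/commgP.
by apply: coset_idr; rewrite ?groupR // morphR //; apply/eqP/commgP.
Qed.

End CentMod.

Section PIndependence.

Variables (gT : finGroupType) (p : nat).
Implicit Types (A S : {set gT}) (z : gT).

Definition pindep A := forall S, S \subset A -> (#|S| <= logn p #|<<S>>|)%N.

Lemma pindep0 : pindep set0.
Proof. by move=> S; rewrite subset0 => /eqP->; rewrite cards0. Qed.

Lemma pindepU1 A z :
  p.-group <<z |: A>> -> z \notin <<A>> -> pindep A -> pindep (z |: A).
Proof.
move=> pzA zA indA S sSzA.
have sSA : S :\ z \subset A.
  by apply/subsetP=> u /setD1P[uz /(subsetP sSzA)]; rewrite !inE (negPf uz).
have [Sz | Sz] := boolP (z \in S); last first.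
  apply: indA; apply: subset_trans sSA; apply/subsetP=> u Su.
  by rewrite !inE Su andbT; apply: contraNneq Sz => <-.
have ltSzS : <<S :\ z>> \proper <<S>>.
  apply/properP; split; first by rewrite genS ?subsetDl.
  exists z; first by rewrite mem_gen.
  by apply: contra zA; apply/subsetP/genS.
rewrite (cardsD1 z) Sz (leq_ltn_trans (indA _ sSA)) // properG_ltn_log //.
exact: pgroupS (genS sSzA) pzA.
Qed.

Lemma pindepU_imset (I : finType) (r : I -> nat) (b : I -> gT) A :
    injective r -> p.-group <<A :|: [set b i | i : I]>> ->
    (forall i, b i \notin <<A :|: b @: [set j | r j < r i]>>) -> pindep A ->
  pindep (A :|: [set b i | i : I]) /\ #|A :|: [set b i | i : I]| = #|A| + #|I|.
Proof.
move=> r_inj pAb bN indA.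
have pAJ (J : {set I}) : p.-group <<A :|: b @: J>>.
  apply: pgroupS pAb; rewrite genS // setUS //.
  by apply/subsetP=> _ /imsetP[j _ ->]; apply: imset_f.
suff indAJ (J : {set I}) : pindep (A :|: b @: J) /\ #|A :|: b @: J| = #|A| + #|J|.
  have <- : b @: [set: I] = [set b i | i : I].
    by apply/setP=> u; apply/imsetP/imsetP=> -[i _ ->]; exists i.
  by rewrite -cardsT; apply: indAJ.
elim: {J}_.+1 {-2}J (ltnSn #|J|) => // n IHn J leJn.
have [-> | [i0 Ji0]] := set_0Vmem J; first by rewrite imset0 setU0 cards0 addn0.
have [i Ji maxi] := arg_maxnP r Ji0; have {}Ji : i \in J := Ji.
have ltJin : #|J :\ i| < n by rewrite (cardsD1 i) Ji in leJn.
have [indJi cardJi] := IHn _ ltJin.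
have biN : b i \notin <<A :|: b @: (J :\ i)>>.
  apply: contra (bN i); apply/subsetP/genS; rewrite setUS // imsetS //.
  apply/subsetP=> j /setD1P[ji Jj]; have le_rji : r j <= r i := maxi j Jj.
  rewrite inE ltn_neqAle le_rji andbT.
  by apply: contra ji => /eqP/r_inj->.
have pAJi := pAJ J; rewrite -(setD1K Ji) imsetU1 setUCA in pAJi *.
split; first exact: pindepU1.
by rewrite !cardsU1 (contra (@mem_gen _ _ _) biN) setD11 cardJi addnCA.
Qed.

Lemma pindep_gen_eq (H : {group gT}) A :
  p.-group H -> A \subset H -> logn p #|H| <= #|A| -> pindep A -> <<A>> = H.
Proof.
move=> pH sAH leHA indA; apply/eqP; rewrite eqEproper gen_subG sAH /=.
apply: contraL (leq_trans leHA (indA A (subxx A))) => /(properG_ltn_log pH).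
by rewrite ltnNge.
Qed.

End PIndependence.

Section Lemma2p2.

Variables (gT : finGroupType) (G N : {group gT}) (p k : nat).
Variables (x y l sigma : gT) (g h : 'I_k -> gT).
Hypotheses (p_pr : prime p) (xG : x \in G) (ox : #[x] = p).
Hypotheses (nN : N <| 'N_G(<[x]>)) (cardN : #|N| = (p ^ (2 * k + 3))%N).
Hypotheses (xN : x \in N) (yNC : y \in N :&: 'C_G[x]) (lNC : l \in N :&: 'C_G[x]).
Hypotheses (gNC : forall i, g i \in N :&: 'C_G[x]).
Hypotheses (hNC : forall i, h i \in N :&: 'C_G[x]).
Hypothesis sigmaN : sigma \in 'N_G(<<[set x; y]>>).
Hypothesis yX : y \notin <[x]>.
Hypotheses (gy : forall i, commute (g i) y) (hy : forall i, commute (h i) y).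
Hypothesis ly : ~ commute l y.
Hypothesis ggX : forall i j, [~ g j, g i] \in <[x]>.
Hypothesis ggsX : forall i j, [~ g j, g i ^ sigma] \in <[x]>.
Hypothesis ghX : forall i j, [~ g j, h i] \in <[x]>.
Hypothesis ghsX : forall i j : 'I_k, (i < j)%N -> [~ g j, h i ^ sigma] \in <[x]>.
Hypothesis ghsNX : forall i, [~ g i, h i ^ sigma] \notin <[x]>.

Local Notation Z := <<[set x; y]>>.
Local Notation C := 'C_G(Z).
Local Notation M := (C :&: N).
Local Notation MMs := (M <*> M :^ sigma).
Local Notation K := (cent1_mod <[x]>).
Local Notation Gs := [set g i | i : 'I_k].
Local Notation Hs := [set h i | i : 'I_k].
Local Notation Gss := [set g i ^ sigma | i : 'I_k].
Local Notation Hss := [set h i ^ sigma | i : 'I_k].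
Local Notation gensM := ([set x; y] :|: Gs :|: Hs).

Lemma mem_M a : a \in N :&: 'C_G[x] -> commute a y -> a \in M.
Proof.
case/setIP=> aN /setIP[aG /cent1P ax] ay; rewrite inE aN andbT inE aG cent_gen.
by apply/centP=> z /set2P[]->.
Qed.

Lemma x_in_M : x \in M.
Proof.
have /setIP[_ /setIP[_ /cent1P yx]] := yNC.
by rewrite mem_M // inE xN inE xG cent1id.
Qed.

Lemma y_in_M : y \in M.
Proof. exact: mem_M. Qed.

Lemma g_in_M i : g i \in M.
Proof. exact: mem_M. Qed.

Lemma h_in_M i : h i \in M.
Proof. exact: mem_M. Qed.

Lemma l_notin_M : l \notin M.
Proof.
apply/negP=> /setIP[/setIP[_ /centP lZ] _]; apply: ly; apply: lZ.
by rewrite mem_gen // !inE eqxx orbT.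
Qed.

Lemma Z_sub_M : Z \subset M.
Proof. by rewrite gen_subG; apply/subsetP=> z /set2P[]->; rewrite ?x_in_M ?y_in_M. Qed.

Lemma sub_M_C : M \subset C.
Proof. exact: subsetIl. Qed.

Lemma g_in_C i : g i \in C.
Proof. exact: subsetP sub_M_C _ (g_in_M i). Qed.

Lemma h_in_C i : h i \in C.
Proof. exact: subsetP sub_M_C _ (h_in_M i). Qed.

Lemma C_norm_cycle : C \subset 'N_G(<[x]>).
Proof.
rewrite subsetI subsetIl (subset_trans _ (cent_sub _)) // cent_cycle.
apply/subsetP=> a /setIP[_ /centP aZ]; apply/cent1P/aZ.
by rewrite mem_gen ?setU11.
Qed.

Lemma sigma_norm_Z : sigma \in 'N(Z).
Proof. by case/setIP: sigmaN. Qed.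

Lemma conjC_sigma : C :^ sigma = C.
Proof.
have /setIP[sigmaG _] := sigmaN.
by rewrite conjIg -centJ (normP sigma_norm_Z) conjGid.
Qed.

Lemma memJ_C a : a \in M -> a ^ sigma \in C.
Proof. by move=> aM; rewrite -conjC_sigma memJ_conjg (subsetP sub_M_C). Qed.

Lemma mem_K a w : a \in C -> w \in C -> (a \in K w) = ([~ a, w] \in <[x]>).
Proof.
have nxC := subsetP (subset_trans C_norm_cycle (subsetIr _ _)).
by move=> aC wC; rewrite mem_cent1_mod ?nxC.
Qed.

Lemma Z_sub_K w : w \in C -> Z \subset K w.
Proof.
move=> wC; have /setIP[_ /centP wZ] := wC; apply/subsetP=> z Zz.
have zC := subsetP (subset_trans Z_sub_M sub_M_C) z Zz.
by rewrite mem_K //; have /commgP/eqP-> : commute z w := esym (wZ z Zz).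
Qed.

(* The g_i are enumerated in decreasing order of i, whence the rank k - j. *)
Lemma g_notin_prev i :
  g i \notin <<[set x; y] :|: g @: [set j : 'I_k | (k - j < k - i)%N]>>.
Proof.
have hsC := memJ_C (h_in_M i).
apply/negP=> gS; case/negP: (ghsNX i); rewrite -mem_K ?g_in_C //.
move: gS; apply: subsetP; rewrite gen_subG subUset.
rewrite (subset_trans (subset_gen _) (Z_sub_K hsC)) /=.
apply/subsetP=> _ /imsetP[j + ->]; rewrite inE => lt_ij.
by rewrite mem_K ?g_in_C //; apply: ghsX; have := ltn_ord j; lia.
Qed.

Lemma h_notin_prev i :
  h i \notin <<[set x; y] :|: Gs :|: h @: [set j : 'I_k | (j < i)%N]>>.
Proof.
have hsC := memJ_C (h_in_M i); have gC := g_in_C i.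
apply/negP=> hS; case/negP: (ghsNX i); rewrite -groupV invg_comm -mem_K //.
move: hS; rewrite -(memJ_conjg _ sigma) -genJ; apply: subsetP; rewrite gen_subG.
apply/subsetP=> _ /imsetP[z Sz ->].
case/setUP: Sz => [/setUP[xyz | /imsetP[j _ ->]] | /imsetP[j + ->]].
- by rewrite (subsetP (Z_sub_K gC)) // memJ_norm ?sigma_norm_Z ?mem_gen.
- by rewrite mem_K ?memJ_C ?g_in_M // -groupV invg_comm.
rewrite inE => lt_ji.
by rewrite mem_K ?memJ_C ?h_in_M // -groupV invg_comm ghsX.
Qed.

Lemma hs_notin_prev i :
  h i ^ sigma \notin <<gensM :|: [set h j ^ sigma | j in [set j : 'I_k | (j < i)%N]]>>.
Proof.
have hsC := memJ_C (h_in_M i); have gC := g_in_C i.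
apply/negP=> hS; case/negP: (ghsNX i); rewrite -groupV invg_comm -mem_K //.
move: hS; apply: subsetP; rewrite gen_subG; apply/subsetP=> z.
case/setUP=> [/setUP[/setUP[xyz | /imsetP[j _ ->]] | /imsetP[j _ ->]] | /imsetP[j + ->]].
- by rewrite (subsetP (Z_sub_K gC)) ?mem_gen.
- by rewrite mem_K ?g_in_C // -groupV invg_comm.
- by rewrite mem_K ?h_in_C // -groupV invg_comm.
rewrite inE => lt_ji.
by rewrite mem_K ?memJ_C ?h_in_M // -groupV invg_comm ghsX.
Qed.

Lemma pgroup_N : p.-group N.
Proof. by rewrite /pgroup cardN pnatX pnat_id. Qed.

Lemma pgroup_M : p.-group M.
Proof. exact: pgroupS (subsetIr _ _) pgroup_N. Qed.

Lemma normal_M : M <| C.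
Proof. exact: normalGI C_norm_cycle nN. Qed.

Lemma normal_conjM : M :^ sigma <| C.
Proof. by have := normal_M; rewrite -(normalJ _ _ sigma) conjC_sigma. Qed.

Lemma normal_MMs : MMs <| C.
Proof. exact: normalY normal_M normal_conjM. Qed.

Lemma pgroup_MMs : p.-group MMs.
Proof.
apply: pgroupS (pcore_pgroup p C); rewrite join_subG.
by rewrite !pcore_max ?pgroupJ ?pgroup_M ?normal_M ?normal_conjM.
Qed.

Lemma gensM_sub_M : gensM \subset M.
Proof.
apply/subsetP=> z /setUP[/setUP[xyz | /imsetP[i _ ->]] | /imsetP[i _ ->]].
- by rewrite (subsetP Z_sub_M) ?mem_gen.
- exact: g_in_M.
exact: h_in_M.
Qed.

Lemma pindep_gensM : pindep p gensM /\ #|gensM| = (2 * k + 2)%N.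
Proof.
have pgen (A : {set gT}) : A \subset M -> p.-group <<A>>.
  by move=> sAM; apply: pgroupS pgroup_M; rewrite gen_subG.
have sA2M := subset_trans (subsetUl _ Hs) gensM_sub_M.
have sA1M := subset_trans (subsetUl _ Gs) sA2M.
have indA1 : pindep p [set x; y].
  rewrite setUC; apply: pindepU1 => //; first by rewrite setUC pgen.
  rewrite -[[set x]]setU0; apply: pindepU1; last exact: pindep0.
    by rewrite pgen // setU0 sub1set x_in_M.
  by rewrite gen0 inE -order_gt1 ox prime_gt1.
have rg_inj : injective (fun j : 'I_k => k - j).
  by move=> i j /= eq_ij; apply: ord_inj; have := ltn_ord i; have := ltn_ord j; lia.
have [indA2 cardA2] := pindepU_imset rg_inj (pgen _ sA2M) g_notin_prev indA1.
have [indA3 cardA3] :=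
  pindepU_imset (@ord_inj k) (pgen _ gensM_sub_M) h_notin_prev indA2.
have xy : x != y by apply: contraNneq yX => <-; apply: cycle_id.
by split => //; rewrite cardA3 cardA2 card_ord cards2 xy; lia.
Qed.

Lemma gen_gensM : <<gensM>> = M.
Proof.
have [indM cardM] := pindep_gensM.
apply: pindep_gen_eq pgroup_M gensM_sub_M _ indM; rewrite cardM -ltnS -addnS.
have ltMN : M \proper N.
  apply/properP; split; first exact: subsetIr.
  by exists l; [case/setIP: lNC | exact: l_notin_M].
by rewrite -(pfactorK (2 * k + 3) p_pr) -cardN properG_ltn_log ?pgroup_N.
Qed.

Lemma gensMs_sub_MMs : gensM :|: Hss \subset MMs.
Proof.
rewrite subUset (subset_trans gensM_sub_M (joing_subl _ _)) /=.
by apply/subsetP=> _ /imsetP[i _ ->]; rewrite mem_gen // inE memJ_conjg h_in_M orbT.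
Qed.

Lemma pindep_gensMs : pindep p (gensM :|: Hss).
Proof.
have pA : p.-group <<gensM :|: Hss>>.
  by apply: pgroupS pgroup_MMs; rewrite gen_subG gensMs_sub_MMs.
have [indM _] := pindep_gensM.
by case: (pindepU_imset (b := fun j => h j ^ sigma) (@ord_inj k) pA
  hs_notin_prev indM).
Qed.

Lemma pgroup_card_gen_subset (S : {set gT}) :
    S \subset x |: (y |: (Gs :|: Hs :|: Hss)) ->
  p.-group <<S>> /\ (p ^ #|S| <= #|<<S>>|)%N.
Proof.
rewrite !setUA => sSA.
have pS : p.-group <<S>>.
  by apply: pgroupS pgroup_MMs; rewrite gen_subG (subset_trans sSA) ?gensMs_sub_MMs.
by rewrite (card_pgroup pS) leq_pexp2l ?prime_gt0 ?pindep_gensMs.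
Qed.

Lemma gen_N : N :=: <<x |: (y |: (Gs :|: Hs :|: [set l]))>>.
Proof.
have [indM cardM] := pindep_gensM; have /setIP[lN _] := lNC.
have lM : l \notin <<gensM>> by rewrite gen_gensM l_notin_M.
have slMN : l |: gensM \subset N.
  by rewrite subUset sub1set lN (subset_trans gensM_sub_M) ?subsetIr.
rewrite !setUA setUC; apply/esym/(pindep_gen_eq pgroup_N slMN).
  by rewrite cardN pfactorK // cardsU1 (contra (@mem_gen _ _ _) lM) cardM; lia.
by apply: pindepU1; rewrite ?(pgroupS _ pgroup_N) ?gen_subG.
Qed.

Lemma gen_conj_gens : <<x |: (y |: (Gs :|: Hs :|: Gss :|: Hss))>> = MMs.
Proof.
rewrite !setUA; apply/eqP; rewrite eqEsubset; apply/andP; split.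
  rewrite gen_subG; apply/subsetP=> z /setUP[/setUP[Mz | ] | ].
  - by rewrite (subsetP (joing_subl _ _)) ?(subsetP gensM_sub_M).
  - by case/imsetP=> i _ ->; rewrite (subsetP (joing_subr _ _)) ?memJ_conjg ?g_in_M.
  - by case/imsetP=> i _ ->; rewrite (subsetP (joing_subr _ _)) ?memJ_conjg ?h_in_M.
have sMA : gensM \subset gensM :|: Gss :|: Hss.
  exact: subset_trans (subsetUl _ Gss) (subsetUl _ Hss).
rewrite join_subG -gen_gensM genS //= sub_conjg gen_subG; apply/subsetP=> z Mz.
rewrite mem_conjgV; case/setUP: Mz => [/setUP[xyz | /imsetP[i _ ->]] | /imsetP[i _ ->]].
- have: z ^ sigma \in Z by rewrite memJ_norm ?sigma_norm_Z ?mem_gen.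
  apply/subsetP/genS/(subset_trans _ sMA).
  exact: subset_trans (subsetUl _ Gs) (subsetUl _ Hs).
- by rewrite mem_gen // !in_setU (imset_f (fun j => g j ^ sigma)) ?orbT.
by rewrite mem_gen // !in_setU (imset_f (fun j => h j ^ sigma)) ?orbT.
Qed.

Lemma lemma2p2_parts :
  [/\ forall S : {set gT}, S \subset x |: (y |: (Gs :|: Hs :|: Hss)) ->
        p.-group <<S>> /\ (p ^ #|S| <= #|<<S>>|)%N,
      N :=: <<x |: (y |: (Gs :|: Hs :|: [set l]))>> &
      let H := <<x |: (y |: (Gs :|: Hs :|: Gss :|: Hss))>> in
      p.-group H /\ H <| C].
Proof.
split; [exact: pgroup_card_gen_subset | exact: gen_N | ].
by rewrite /= gen_conj_gens; split; [exact: pgroup_MMs | exact: normal_MMs].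
Qed.

End Lemma2p2.

Theorem lemma2p2 (gT : finGroupType) (G N : {group gT}) (p k : nat)
  (x y l sigma : gT) (g h : 'I_k -> gT) :
  prime p -> x \in G -> #[x] = p ->
  N <| 'N_G(<[x]>) -> #|N| = (p ^ (2 * k + 3))%N -> x \in N ->
  y \in N :&: 'C_G[x] -> l \in N :&: 'C_G[x] ->
  (forall i, g i \in N :&: 'C_G[x]) -> (forall i, h i \in N :&: 'C_G[x]) ->
  #[y] = p -> #[l] = p -> (forall i, #[g i] = p) -> (forall i, #[h i] = p) ->
  sigma \in 'N_G(<<[set x; y]>>) ->
  (* (i) *) y \notin <[x]> ->
  (* (ii) *) (forall i, commute (g i) y) -> (forall i, commute (h i) y) ->
  ~ commute l y ->
  (* (iii) *)
  (forall i j, [~ g j, g i] \in <[x]>) ->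
  (forall i j, [~ g j, g i ^ sigma] \in <[x]>) ->
  (forall i j, [~ g j, h i] \in <[x]>) ->
  (* (iv) *)
  (forall i j : 'I_k, (i < j)%N -> [~ g j, h i ^ sigma] \in <[x]>) ->
  (forall i, [~ g i, h i ^ sigma] \notin <[x]>) ->
  [/\ (* (a) *)
      (forall S : {set gT},
         S \subset x |: (y |: ([set g i | i : 'I_k] :|: [set h i | i : 'I_k]
                                 :|: [set h i ^ sigma | i : 'I_k])) ->
         p.-group <<S>> /\ (p ^ #|S| <= #|<<S>>|)%N),
      (* (b) *)
      N :=: << x |: (y |: ([set g i | i : 'I_k] :|: [set h i | i : 'I_k]
                              :|: [set l])) >> &
      (* (c) *)
      let H := << x |: (y |: ([set g i | i : 'I_k] :|: [set h i | i : 'I_k]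
                     :|: [set g i ^ sigma | i : 'I_k]
                     :|: [set h i ^ sigma | i : 'I_k])) >> in
      p.-group H /\ H <| 'C_G(<<[set x; y]>>)].
Proof.
move=> p_pr xG ox nN cardN xN yNC lNC gNC hNC _ _ _ _.
exact: lemma2p2_parts.
Qed.
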